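(* Let $\mathcal C$ be a real polynomial curve. If there exist a point $P_0\in\mathbb R^2$ and an angle $\theta\in(0,2\pi)$ such that the rotation of center $P_0$ and angle $\theta$ maps $\mathcal C$ onto itself, then $\theta=\pi$. That is, the only form of rotation symmetry a real polynomial curve can have is central symmetry.
   Context: A real polynomial curve is the plane curve $\mathcal C=\{(x(t),y(t)) : t\in\mathbb R\}\subset\mathbb R^2$ given by a parametrization $\varphi(t)=(x(t),y(t))$ with $x(t),y(t)\in\mathbb R[t]$ not both constant. $\mathcal C$ has rotation symmetry if some rotation of center $P_0$ and angle $\theta\in(0,2\pi)$ maps $\mathcal C$ onto itself; when $\theta=\pi$ this is called central symmetry (symmetry with respect to the point $P_0$, the center of symmetry). *)

From Stdlib Require Import Reals List.
Open Scope R_scope.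

(* A real polynomial, given by its list of coefficients [a0; a1; ...; an]
   (lowest degree first); evaluation by Horner's scheme. *)
Definition peval (p : list R) (t : R) : R :=
  fold_right (fun a acc => a + t * acc) 0 p.

(* The polynomial p is constant (as a function of t, equivalently as a
   polynomial since R is infinite). *)
Definition pconst (p : list R) : Prop :=
  forall t s : R, peval p t = peval p s.

Definition param (px py : list R) (t : R) : R * R :=
  (peval px t, peval py t).

Definition rotation (x0 y0 theta : R) (P : R * R) : R * R :=
  let (a, b) := P in
  (x0 + cos theta * (a - x0) - sin theta * (b - y0),
   y0 + sin theta * (a - x0) + cos theta * (b - y0)).

Definition on_curve (px py : list R) (P : R * R) : Prop :=
  exists t : R, param px py t = P.

Definition maps_curve_onto_itself (px py : list R) (f : R * R -> R * R) : Prop :=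
  (forall P, on_curve px py P -> on_curve px py (f P)) /\
  (forall Q, on_curve px py Q -> exists P, on_curve px py P /\ f P = Q).

From Stdlib Require Import Reals List Lra Lia Psatz Classical.
Open Scope R_scope.

(* Let n >= 1 be the common degree of (x(t), y(t)) and v = (a, b)
   the (nonzero) vector of leading coefficients.  Measuring points P by their
   coordinate along v and across v, the curve has v as asymptotic direction:
   for every eps > 0 there is K with |across P| <= eps |along P| + K on the
   curve, because across(phi(t)) has degree < n while along(phi(t)) has
   leading term (a^2 + b^2) t^n; moreover along(phi(t)) is unbounded.
   A rotation of angle theta turns the along-coordinate of a point P into an
   across-coordinate sin(theta) * along P + O(|across P|) + const.  So if the
   rotation maps the curve into itself, applying the asymptotic bound to P and
   to its image at points far out along v forces sin(theta) = 0, whence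
   theta = pi since 0 < theta < 2 pi.  Only the inclusion R(C) <= C is used. *)

(* The weight max(1, |t|): a polynomial of degree <= m is O(weight t ^ m) on R. *)
Definition weight (t : R) : R := Rmax 1 (Rabs t).

Lemma weight_ge1 t : 1 <= weight t.
Proof. apply Rmax_l. Qed.

Lemma weight_abs t : 1 <= Rabs t -> weight t = Rabs t.
Proof. intros H; unfold weight; apply Rmax_right; exact H. Qed.

Lemma pow_ge1 x k : 1 <= x -> 1 <= x ^ k.
Proof. intros; induction k; simpl; nra. Qed.

Definition grows_at_most (f : R -> R) (m : nat) : Prop :=
  exists C, forall t, Rabs (f t) <= C * weight t ^ m.

Definition coef_norm (p : list R) : R :=
  fold_right (fun a acc => Rabs a + acc) 0 p.

Lemma coef_norm_ge0 p : 0 <= coef_norm p.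
Proof. induction p; simpl; [lra | pose proof (Rabs_pos a); lra]. Qed.

Lemma peval_bound p k t :
  (length p <= S k)%nat -> Rabs (peval p t) <= coef_norm p * weight t ^ k.
Proof.
  revert k; induction p as [|a q IH]; intros k Hl; simpl.
  - rewrite Rabs_R0. pose proof (pow_ge1 (weight t) k (weight_ge1 t)). lra.
  - simpl in Hl. destruct k as [|k].
    + destruct q; [|simpl in Hl; lia]. simpl. rewrite Rmult_0_r, Rplus_0_r. lra.
    + specialize (IH k ltac:(lia)).
      pose proof (Rabs_triang a (t * peval q t)) as Htri. rewrite Rabs_mult in Htri.
      assert (Hw : Rabs t <= weight t) by apply Rmax_r.
      pose proof (weight_ge1 t). pose proof (pow_ge1 (weight t) k (weight_ge1 t)).
      pose proof (Rabs_pos a). pose proof (Rabs_pos t).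
      pose proof (Rabs_pos (peval q t)). pose proof (coef_norm_ge0 q).
      assert (Rabs t * Rabs (peval q t) <= weight t * (coef_norm q * weight t ^ k))
        by (apply Rmult_le_compat; lra).
      assert (1 <= weight t * weight t ^ k) by nra.
      simpl. nra.
Qed.

Lemma peval_grows p m : (length p <= S m)%nat -> grows_at_most (peval p) m.
Proof. intros Hl; exists (coef_norm p); intros t; apply peval_bound, Hl. Qed.

Lemma grows_lin f g m a b :
  grows_at_most f m -> grows_at_most g m ->
  grows_at_most (fun t => a * f t + b * g t) m.
Proof.
  intros [Cf Hf] [Cg Hg]. exists (Rabs a * Cf + Rabs b * Cg); intros t.
  pose proof (Rabs_triang (a * f t) (b * g t)) as Htri. rewrite !Rabs_mult in Htri.
  pose proof (Rmult_le_compat_l (Rabs a) _ _ (Rabs_pos a) (Hf t)).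
  pose proof (Rmult_le_compat_l (Rabs b) _ _ (Rabs_pos b) (Hg t)).
  nra.
Qed.

Lemma leading_term_lower_bound g m Cg L t :
  (forall s, Rabs (g s) <= Cg * weight s ^ m) -> 1 <= Rabs t ->
  Rabs t ^ m * (Rabs L * Rabs t - Cg) <= Rabs (g t + L * t ^ S m).
Proof.
  intros Hg Ht.
  pose proof (Hg t) as Hgt. rewrite (weight_abs t Ht) in Hgt.
  assert (Hlead : Rabs (L * t ^ S m) = Rabs L * Rabs t * Rabs t ^ m)
    by (rewrite Rabs_mult, <- RPow_abs; simpl; ring).
  pose proof (Rabs_triang (g t + L * t ^ S m) (- g t)) as Htri.
  rewrite Rabs_Ropp in Htri. replace (g t + L * t ^ S m + - g t) with (L * t ^ S m) in Htri by ring.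
  lra.
Qed.

Lemma lower_degree_negligible f g m L eps :
  grows_at_most f m -> grows_at_most g m -> L <> 0 -> 0 < eps ->
  exists K, forall t, Rabs (f t) <= eps * Rabs (g t + L * t ^ S m) + K.
Proof.
  intros [Cf Hf] [Cg Hg] HL Heps.
  assert (HLpos : 0 < Rabs L) by (apply Rabs_pos_lt; exact HL).
  set (M := Rmax 1 ((Cf / eps + Cg) / Rabs L)).
  assert (HM1 : 1 <= M) by apply Rmax_l.
  exists (Rabs Cf * M ^ m); intros t.
  pose proof (Rabs_pos (g t + L * t ^ S m)).
  destruct (Rle_dec (Rabs t) M) as [Hsmall | Hlarge].
  - (* on the compact part |t| <= M the bound K suffices *)
    assert (HwM : weight t ^ m <= M ^ m)
      by (apply pow_incr; split; [pose proof (weight_ge1 t); lra | apply Rmax_lub; lra]).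
    pose proof (Hf t). pose proof (Rle_abs Cf).
    pose proof (pow_ge1 (weight t) m (weight_ge1 t)).
    assert (Cf * weight t ^ m <= Rabs Cf * weight t ^ m) by (apply Rmult_le_compat_r; lra).
    assert (Rabs Cf * weight t ^ m <= Rabs Cf * M ^ m)
      by (apply Rmult_le_compat_l; [apply Rabs_pos | exact HwM]).
    nra.
  - (* far out, the leading term of g + L t^(m+1) dominates f *)
    apply Rnot_le_lt in Hlarge.
    assert (Ht1 : 1 <= Rabs t) by lra.
    assert (Hfar : Cf / eps + Cg <= Rabs L * Rabs t).
    { assert (Hq : (Cf / eps + Cg) / Rabs L < Rabs t)
        by (pose proof (Rmax_r 1 ((Cf / eps + Cg) / Rabs L)) as HM; fold M in HM; lra).
      apply (Rmult_lt_compat_l (Rabs L)) in Hq; [|lra].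
      replace (Rabs L * ((Cf / eps + Cg) / Rabs L)) with (Cf / eps + Cg) in Hq by (field; lra).
      lra. }
    assert (Hcf : Cf <= eps * (Rabs L * Rabs t - Cg)).
    { replace Cf with (eps * (Cf / eps)) by (field; lra). apply Rmult_le_compat_l; lra. }
    pose proof (leading_term_lower_bound g m Cg L t Hg Ht1) as Hlow.
    pose proof (Hf t) as Hft. rewrite (weight_abs t Ht1) in Hft.
    pose proof (pow_le (Rabs t) m (Rabs_pos t)).
    assert (Cf * Rabs t ^ m <= eps * (Rabs L * Rabs t - Cg) * Rabs t ^ m)
      by (apply Rmult_le_compat_r; lra).
    pose proof (Rabs_pos Cf). pose proof (pow_le M m ltac:(lra)).
    nra.
Qed.

Lemma leading_term_unbounded g m L :
  grows_at_most g m -> L <> 0 -> forall M, exists t, M < Rabs (g t + L * t ^ S m).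
Proof.
  intros [Cg Hg] HL M.
  assert (HLpos : 0 < Rabs L) by (apply Rabs_pos_lt; exact HL).
  set (t := Rmax 1 ((Rabs M + Rabs Cg) / Rabs L) + 1).
  assert (Ht1 : 2 <= t) by (unfold t; pose proof (Rmax_l 1 ((Rabs M + Rabs Cg) / Rabs L)); lra).
  assert (Habs : Rabs t = t) by (apply Rabs_right; lra).
  exists t.
  assert (Hlin : Rabs M + Rabs Cg < Rabs L * t).
  { assert (Hq : (Rabs M + Rabs Cg) / Rabs L < t)
      by (unfold t; pose proof (Rmax_r 1 ((Rabs M + Rabs Cg) / Rabs L)); lra).
    apply (Rmult_lt_compat_l (Rabs L)) in Hq; [|lra].
    replace (Rabs L * ((Rabs M + Rabs Cg) / Rabs L)) with (Rabs M + Rabs Cg) in Hq by (field; lra).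
    exact Hq. }
  pose proof (leading_term_lower_bound g m Cg L t Hg ltac:(lra)) as Hlow.
  rewrite Habs in Hlow. pose proof (pow_ge1 t m ltac:(lra)) as Hpow.
  pose proof (Rle_abs M). pose proof (Rle_abs Cg). pose proof (Rabs_pos M).
  assert (1 * (Rabs L * t - Cg) <= t ^ m * (Rabs L * t - Cg))
    by (apply Rmult_le_compat_r; lra).
  lra.
Qed.

(* Coordinates of P along and across the vector (a, b) (up to the factor a^2+b^2). *)
Definition along (a b : R) (P : R * R) : R := a * fst P + b * snd P.
Definition across (a b : R) (P : R * R) : R := a * snd P - b * fst P.

Lemma rotation_coordinates a b x0 y0 theta :
  exists K0 K1, forall P,
    across a b (rotation x0 y0 theta P)
      = sin theta * along a b P + cos theta * across a b P + K0 /\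
    along a b (rotation x0 y0 theta P)
      = cos theta * along a b P - sin theta * across a b P + K1.
Proof.
  set (c := cos theta). set (s := sin theta).
  exists (a * (y0 - s * x0 - c * y0) - b * (x0 - c * x0 + s * y0)),
         (a * (x0 - c * x0 + s * y0) + b * (y0 - s * x0 - c * y0)).
  intros [x y]; unfold rotation, along, across; simpl; fold c s; split; ring.
Qed.

(* The quantitative core: let a point have coordinates (d, x) along/across v
   and its rotated image (d', x') = (c d - s x + K1, s d + c x + K0).  If both
   satisfy the asymptotic bound with eps = |s|/4, then |s d| stays bounded. *)
Lemma rotated_across_bound s c d x K K0 K1 :
  Rabs s <= 1 -> Rabs c <= 1 ->
  Rabs x <= Rabs s / 4 * Rabs d + Rabs K ->
  Rabs (s * d + c * x + K0) <= Rabs s / 4 * Rabs (c * d - s * x + K1) + Rabs K ->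
  7 / 16 * (Rabs s * Rabs d) <= 3 * Rabs K + Rabs K1 + Rabs K0.
Proof.
  intros Hs1 Hc1 HxP HxQ.
  set (u := Rabs s * Rabs d).
  assert (Hed : Rabs s / 4 * Rabs d = u / 4) by (unfold u; field).
  pose proof (Rabs_pos s). pose proof (Rabs_pos d). pose proof (Rabs_pos x).
  pose proof (Rabs_pos K). pose proof (Rabs_pos K1).
  assert (Hd' : Rabs (c * d - s * x + K1) <= 5 / 4 * Rabs d + Rabs K + Rabs K1).
  { unfold Rminus.
    pose proof (Rabs_triang (c * d + - (s * x)) K1).
    pose proof (Rabs_triang (c * d) (- (s * x))).
    rewrite Rabs_Ropp, !Rabs_mult in *.
    pose proof (Rmult_le_compat_r (Rabs d) _ _ (Rabs_pos d) Hc1).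
    pose proof (Rmult_le_compat_r (Rabs x) _ _ (Rabs_pos x) Hs1).
    assert (Rabs s / 4 * Rabs d <= Rabs d / 4) by nra.
    lra. }
  assert (Hx' : Rabs (s * d + c * x + K0) <= 5 / 16 * u + 2 * Rabs K + Rabs K1).
  { pose proof (Rmult_le_compat_l (Rabs s / 4) _ _ ltac:(lra) Hd').
    assert (Rabs s / 4 * (Rabs K + Rabs K1) <= Rabs K + Rabs K1) by nra.
    assert (Rabs s / 4 * (5 / 4 * Rabs d + Rabs K + Rabs K1)
            = 5 / 16 * u + Rabs s / 4 * (Rabs K + Rabs K1)) by (unfold u; field).
    lra. }
  assert (Hu : u <= Rabs (s * d + c * x + K0) + Rabs x + Rabs K0).
  { unfold u; rewrite <- Rabs_mult.
    assert (E : s * d = (s * d + c * x + K0) + - (c * x) + - K0) by ring.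
    rewrite E at 1.
    pose proof (Rabs_triang (s * d + c * x + K0 + - (c * x)) (- K0)).
    pose proof (Rabs_triang (s * d + c * x + K0) (- (c * x))).
    rewrite !Rabs_Ropp, Rabs_mult in *.
    pose proof (Rmult_le_compat_r (Rabs x) _ _ (Rabs_pos x) Hc1).
    lra. }
  lra.
Qed.

Lemma rotation_preserving_asymptotic_direction (S : R * R -> Prop) a b x0 y0 theta :
  (forall eps, 0 < eps -> exists K, forall P, S P ->
     Rabs (across a b P) <= eps * Rabs (along a b P) + K) ->
  (forall M, exists P, S P /\ M < Rabs (along a b P)) ->
  (forall P, S P -> S (rotation x0 y0 theta P)) ->
  sin theta = 0.
Proof.
  intros Hasym Hunb Hrot.
  destruct (Req_dec (sin theta) 0) as [Hs | Hs]; [exact Hs | exfalso].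
  assert (Hspos : 0 < Rabs (sin theta)) by (apply Rabs_pos_lt; exact Hs).
  destruct (Hasym (Rabs (sin theta) / 4) ltac:(lra)) as [K HK].
  destruct (rotation_coordinates a b x0 y0 theta) as [K0 [K1 Hcoord]].
  set (C := 3 * Rabs K + Rabs K1 + Rabs K0).
  destruct (Hunb (3 * C / Rabs (sin theta))) as [P [HP Hfar]].
  destruct (Hcoord P) as [Hx' Hd'].
  pose proof (HK P HP) as HxP. pose proof (HK _ (Hrot P HP)) as HxQ.
  rewrite Hx', Hd' in HxQ. pose proof (Rle_abs K).
  pose proof (rotated_across_bound (sin theta) (cos theta) (along a b P) (across a b P) K K0 K1
    ltac:(apply Rabs_le, SIN_bound) ltac:(apply Rabs_le, COS_bound)
    ltac:(lra) ltac:(lra)) as Hbound.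
  apply (Rmult_lt_compat_l (Rabs (sin theta))) in Hfar; [|lra].
  replace (Rabs (sin theta) * (3 * C / Rabs (sin theta))) with (3 * C) in Hfar by (field; lra).
  unfold C in *. pose proof (Rabs_pos K). pose proof (Rabs_pos K0). pose proof (Rabs_pos K1).
  lra.
Qed.

Section PolynomialCurve.

Variables (px py : list R) (m : nat) (a b : R) (A B : R -> R).
Hypothesis lead_nonzero : ~ (a = 0 /\ b = 0).
Hypothesis A_lower : grows_at_most A m.
Hypothesis B_lower : grows_at_most B m.
Hypothesis px_split : forall t, peval px t = A t + a * t ^ S m.
Hypothesis py_split : forall t, peval py t = B t + b * t ^ S m.

Let N := a * a + b * b.

Lemma N_nonzero : N <> 0.
Proof.
  unfold N; intros HN; apply lead_nonzero.
  split; [destruct (Req_dec a 0) | destruct (Req_dec b 0)]; auto; nra.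
Qed.

Lemma along_param t :
  along a b (param px py t) = (a * A t + b * B t) + N * t ^ S m.
Proof. unfold along, param, N; simpl fst; simpl snd; rewrite px_split, py_split; ring. Qed.

Lemma across_param t :
  across a b (param px py t) = a * B t + (- b) * A t.
Proof. unfold across, param; simpl fst; simpl snd; rewrite px_split, py_split; ring. Qed.

Lemma curve_asymptotic_direction eps : 0 < eps ->
  exists K, forall P, on_curve px py P ->
    Rabs (across a b P) <= eps * Rabs (along a b P) + K.
Proof.
  intros Heps.
  destruct (lower_degree_negligible (fun t => a * B t + (- b) * A t)
              (fun t => a * A t + b * B t) m N eps
              (grows_lin _ _ _ _ _ B_lower A_lower) (grows_lin _ _ _ _ _ A_lower B_lower)
              N_nonzero Heps) as [K HK].
  exists K; intros P [t <-]. rewrite along_param, across_param. apply HK.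
Qed.

Lemma curve_unbounded_along M :
  exists P, on_curve px py P /\ M < Rabs (along a b P).
Proof.
  destruct (leading_term_unbounded (fun t => a * A t + b * B t) m N
              (grows_lin _ _ _ _ _ A_lower B_lower) N_nonzero M) as [t Ht].
  exists (param px py t); split; [exists t; reflexivity | rewrite along_param; exact Ht].
Qed.

End PolynomialCurve.

Lemma peval_zero p t : (forall k, nth k p 0 = 0) -> peval p t = 0.
Proof.
  induction p as [|a q IH]; intros H; simpl; [reflexivity|].
  rewrite IH; [specialize (H 0%nat); simpl in H; lra | intros k; exact (H (S k))].
Qed.

Lemma peval_split_top p n t : (forall k, (n < k)%nat -> nth k p 0 = 0) ->
  peval p t = peval (firstn n p) t + nth n p 0 * t ^ n.
Proof.
  revert n; induction p as [|a q IH]; intros n H.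
  - destruct n; simpl; ring.
  - destruct n as [|n]; simpl.
    + rewrite (peval_zero q t); [ring | intros k; exact (H (S k) ltac:(lia))].
    + rewrite (IH n); [ring | intros k Hk; exact (H (S k) ltac:(lia))].
Qed.

Lemma degree_zero_const p : (forall k, (0 < k)%nat -> nth k p 0 = 0) -> pconst p.
Proof.
  intros H t s. rewrite (peval_split_top p 0 t H), (peval_split_top p 0 s H).
  simpl; ring.
Qed.

Lemma joint_degree (px py : list R) :
  (forall k, (0 < k)%nat -> nth k px 0 = 0 /\ nth k py 0 = 0) \/
  exists m, ~ (nth (S m) px 0 = 0 /\ nth (S m) py 0 = 0) /\
    forall k, (S m < k)%nat -> nth k px 0 = 0 /\ nth k py 0 = 0.
Proof.
  assert (Hdown : forall n, (forall k, (n < k)%nat -> nth k px 0 = 0 /\ nth k py 0 = 0) ->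
    (forall k, (0 < k)%nat -> nth k px 0 = 0 /\ nth k py 0 = 0) \/
    exists m, ~ (nth (S m) px 0 = 0 /\ nth (S m) py 0 = 0) /\
      forall k, (S m < k)%nat -> nth k px 0 = 0 /\ nth k py 0 = 0).
  { induction n as [|n IH]; intros H; [left; exact H|].
    destruct (classic (nth (S n) px 0 = 0 /\ nth (S n) py 0 = 0)) as [Hz | Hz].
    - apply IH; intros k Hk.
      destruct (Nat.eq_dec k (S n)) as [-> | ]; [exact Hz | apply H; lia].
    - right; exists n; split; assumption. }
  apply (Hdown (length px + length py)%nat); intros k Hk; split; apply nth_overflow; lia.
Qed.

Lemma sin_zero_angle theta : 0 < theta < 2 * PI -> sin theta = 0 -> theta = PI.
Proof.
  intros Hth Hs. destruct (sin_eq_0_0 _ Hs) as [k ->].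
  pose proof PI_RGT_0.
  assert (Hk0 : (0 < k)%Z) by (apply lt_IZR; nra).
  assert (Hk2 : (k < 2)%Z) by (apply lt_IZR; nra).
  replace k with 1%Z by lia. simpl; ring.
Qed.

Theorem theorem1 (px py : list R) :
  ~ (pconst px /\ pconst py) ->
  forall (x0 y0 theta : R),
    0 < theta < 2 * PI ->
    maps_curve_onto_itself px py (rotation x0 y0 theta) ->
    theta = PI.
Proof.
  intros Hnc x0 y0 theta Hth [Hinto _].
  destruct (joint_degree px py) as [Hconst | [m [Hlead Htop]]].
  { exfalso; apply Hnc; split; apply degree_zero_const; intros k Hk; apply Hconst, Hk. }
  set (a := nth (S m) px 0) in *. set (b := nth (S m) py 0) in *.
  pose proof (fun t => peval_split_top px (S m) t (fun k Hk => proj1 (Htop k Hk))) as Hx.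
  pose proof (fun t => peval_split_top py (S m) t (fun k Hk => proj2 (Htop k Hk))) as Hy.
  pose proof (peval_grows _ m (firstn_le_length (S m) px)) as HA.
  pose proof (peval_grows _ m (firstn_le_length (S m) py)) as HB.
  apply sin_zero_angle; [exact Hth|].
  apply (rotation_preserving_asymptotic_direction (on_curve px py) a b x0 y0 theta).
  - exact (curve_asymptotic_direction px py m a b _ _ Hlead HA HB Hx Hy).
  - exact (curve_unbounded_along px py m a b _ _ Hlead HA HB Hx Hy).
  - exact Hinto.
Qed.
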